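(* Let $G=\mathbb Z\wr\mathbb Z=\langle a\rangle\wr\langle b\rangle$. Then $\mathrm{pw}(G,\{a,b\})\le 3$.
   Context: $a$ generates the first (base) infinite cyclic factor and $b$ the second (acting) infinite cyclic factor of the restricted wreath product. A palindrome in a group generated by $X$ is an element represented by a reduced word in $X^{\pm1}$ reading the same forwards and backwards; $l_{\mathcal P}(g)$ is the minimal number of palindromes whose product is $g$; $\mathrm{pw}(G,X)=\sup_{g\in G}l_{\mathcal P}(g)$. *)

(* The restricted wreath product Z wr Z = <a> wr <b>,
   modelled concretely: an element is a pair (f, n) standing for f * b^n,
   where f : int -> int is a finitely supported function (an element of the
   base group  (+)_{i in Z} <a>, with f i the exponent of the copy of a at
   position i) and n : int the exponent of b.  Multiplication:
     (f, n) * (g, m) = (x |-> f x + g (x - n), n + m),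
   i.e. b^n acts on the base by shifting. *)
From mathcomp Require Import all_boot all_order all_algebra.
Set Implicit Arguments. Unset Strict Implicit. Unset Printing Implicit Defensive.
Import Order.TTheory GRing.Theory Num.Theory.
Local Open Scope ring_scope.

Definition WZ : Type := ((int -> int) * int)%type.

Definition in_WZ (g : WZ) : Prop :=
  exists N : nat, forall z : int, (N < `|z|)%N -> g.1 z = 0.

Definition eqWZ (g h : WZ) : Prop := (forall z, g.1 z = h.1 z) /\ g.2 = h.2.

Definition oneWZ : WZ := (fun _ => 0, 0).

Definition mulWZ (g h : WZ) : WZ :=
  (fun x => g.1 x + h.1 (x - g.2), g.2 + h.2).

Inductive letter := La | LaI | Lb | LbI.

Definition inv_letter (l : letter) : letter :=
  match l with La => LaI | LaI => La | Lb => LbI | LbI => Lb end.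

Definition letter_val (l : letter) : WZ :=
  match l with
  | La => (fun x => if x == 0 then 1 else 0, 0)
  | LaI => (fun x => if x == 0 then -1 else 0, 0)
  | Lb => (fun _ => 0, 1)
  | LbI => (fun _ => 0, -1)
  end.

Definition eval_word (w : seq letter) : WZ :=
  foldr (fun l acc => mulWZ (letter_val l) acc) oneWZ w.

Definition reduced (w : seq letter) : Prop :=
  forall i : nat, (i.+1 < size w)%N -> nth La w i.+1 <> inv_letter (nth La w i).

Definition is_palindrome (g : WZ) : Prop :=
  exists w : seq letter, reduced w /\ rev w = w /\ eqWZ (eval_word w) g.

Definition pal_len_le (k : nat) (g : WZ) : Prop :=
  exists ps : seq WZ, (size ps <= k)%N /\ (forall i : nat, (i < size ps)%N -> is_palindrome (nth oneWZ ps i))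
    /\ eqWZ (foldr mulWZ oneWZ ps) g.

Definition pw_le (k : nat) : Prop := forall g : WZ, in_WZ g -> pal_len_le k g.

From HB Require Import structures.
From mathcomp Require Import all_boot all_order all_algebra.
From mathcomp Require Import zify ring.
From Stdlib Require Import FunctionalExtensionality.
Set Implicit Arguments. Unset Strict Implicit. Unset Printing Implicit Defensive.
Import Order.TTheory GRing.Theory Num.Theory.
Local Open Scope ring_scope.

(* Every finitely supported f splits as
   s1 + s2 with s1 symmetric about 0 and s2 symmetric about 1/2, because
   modulo such functions delta_c and delta_(c+1) agree; then
   (f, n) = (s1, 0) (s2, 1) b^(n-1).  A pair (s, k) with k in {0, 1} and s
   symmetric about k/2 is a palindrome: starting from a^(s 0) (k = 0) or
   b (k = 1), the symmetric pairs of s are added one at a time by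
   sandwiching between b^t a^e b^-t and its reverse, and sandwiching a
   palindrome between two equal letters keeps it a (freely reduced)
   palindrome. *)

Definition letter_eqb (x y : letter) : bool :=
  match x, y with La, La | LaI, LaI | Lb, Lb | LbI, LbI => true | _, _ => false end.

Lemma letter_eqP : Equality.axiom letter_eqb.
Proof. by case; case; constructor. Qed.

HB.instance Definition _ := hasDecEq.Build letter letter_eqP.

Lemma eqWZP g h : eqWZ g h -> g = h.
Proof.
by case: g h => [f n] [f' n'] [/= Ef ->]; congr pair; apply: functional_extensionality.
Qed.

Lemma mul1WZ g : mulWZ oneWZ g = g.
Proof. by apply: eqWZP; split => [x|] /=; rewrite ?subr0 add0r. Qed.

Lemma mulWZ1 g : mulWZ g oneWZ = g.
Proof. by apply: eqWZP; split => [x|] /=; rewrite addr0. Qed.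

Lemma mulWZA g h k : mulWZ g (mulWZ h k) = mulWZ (mulWZ g h) k.
Proof. by apply: eqWZP; split => [x|] /=; rewrite addrA // opprD addrA. Qed.

Lemma inv_letterK : involutive inv_letter.
Proof. by case. Qed.

Lemma letter_valK l : mulWZ (letter_val l) (letter_val (inv_letter l)) = oneWZ.
Proof. by apply: eqWZP; split => [x|]; case: l => //=; rewrite subr0; case: (x == 0). Qed.

Lemma letter_valVK l : mulWZ (letter_val (inv_letter l)) (letter_val l) = oneWZ.
Proof. by rewrite -{2}(inv_letterK l) letter_valK. Qed.

Lemma eval_word_cons l w : eval_word (l :: w) = mulWZ (letter_val l) (eval_word w).
Proof. by []. Qed.

Lemma eval_word_cat w1 w2 :
  eval_word (w1 ++ w2) = mulWZ (eval_word w1) (eval_word w2).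
Proof. by elim: w1 => [|l w1 IH] /=; rewrite ?mul1WZ // IH mulWZA. Qed.

Lemma eval_word_rcons w l : eval_word (rcons w l) = mulWZ (eval_word w) (letter_val l).
Proof. by rewrite -cats1 eval_word_cat /= mulWZ1. Qed.

Definition no_cancel : rel letter := fun x y => y != inv_letter x.

Lemma reducedE w : reduced w <-> sorted no_cancel w.
Proof.
case: w => [|x p] /=; first by split => // _ i.
split => [red | /(pathP La) srt i lt_i].
  by apply/(pathP La) => i lt_i; apply/eqP; apply: red.
exact/eqP/srt.
Qed.

Definition palindromic (g : WZ) : Prop :=
  exists w, [/\ sorted no_cancel w, rev w = w & eval_word w = g].

Lemma palindromic_is_palindrome g : palindromic g -> is_palindrome g.
Proof. by case=> w [/reducedE red rev_w <-]; exists w. Qed.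

Lemma palindromic_eqWZ g h : eqWZ g h -> palindromic g -> palindromic h.
Proof. by move/eqWZP->. Qed.

(* If the palindrome word starts with [l^-1] it also ends with it, and both
   letters cancel against the new ones; otherwise [l w l] is still reduced. *)
Lemma palindromic_sandwich l g :
  palindromic g -> palindromic (mulWZ (letter_val l) (mulWZ g (letter_val l))).
Proof.
case=> -[|y v] [red rev_w <-].
  by exists [:: l; l]; split; [case: l | | rewrite /= mul1WZ mulWZ1].
have [y_inv|y_l] := eqVneq y (inv_letter l).
  subst y; case/lastP: v red rev_w => [|v z] red rev_w.
    by exists [:: l]; split; rewrite //= !mulWZ1 mulWZA letter_valK mul1WZ.
  move: rev_w; rewrite rev_cons rev_rcons => -[-> /rcons_inj [rev_v]].
  exists v; split=> //; first by move: red; rewrite /= rcons_path => /andP[/path_sorted].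
  by rewrite eval_word_cons eval_word_rcons -!mulWZA letter_valVK mulWZ1 !mulWZA letter_valK mul1WZ.
have last_y : last y v = y by move: rev_w; rewrite {1}(lastI y v) rev_rcons => -[].
exists (l :: rcons (y :: v) l); split.
- move: red; rewrite /= rcons_path /= last_y => ->.
  by move: y_l; rewrite /no_cancel; clear; case: l; case: y.
- by rewrite rev_cons rev_rcons rev_w.
- by rewrite eval_word_cons eval_word_rcons.
Qed.

Lemma palindromic_mirror w g :
  palindromic g -> palindromic (mulWZ (eval_word w) (mulWZ g (eval_word (rev w)))).
Proof.
elim: w => [|l w IH] Pg; first by rewrite /= mul1WZ mulWZ1.
move: (palindromic_sandwich l (IH Pg)).
by rewrite rev_cons eval_word_rcons eval_word_cons !mulWZA.
Qed.

Definition delta (c x : int) : int := if x == c then 1 else 0.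

Definition aexp (e : int) : WZ := (fun x => e * delta 0 x, 0).

Definition bexp (k : int) : WZ := (fun _ => 0, k).

Lemma delta_shift c t x : delta c (x - t) = delta (c + t) x.
Proof. by rewrite /delta subr_eq. Qed.

Lemma delta_reflect k c x : delta c (k - x) = delta (k - c) x.
Proof. by rewrite /delta; case: eqP => h1; case: eqP => h2 //; lia. Qed.

Lemma mulWZ_aexp e e' : mulWZ (aexp e) (aexp e') = aexp (e + e').
Proof. by apply: eqWZP; split => [x|] /=; rewrite ?subr0 ?mulrDl. Qed.

Lemma mulWZ_bexp k k' : mulWZ (bexp k) (bexp k') = bexp (k + k').
Proof. by apply: eqWZP; split => [x|] /=; rewrite ?add0r. Qed.

Lemma letter_valE l :
  letter_val l = match l with La => aexp 1 | LaI => aexp (-1)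
                            | Lb => bexp 1 | LbI => bexp (-1) end.
Proof.
apply: eqWZP; split => [x|] //; case: l => //=;
  by rewrite /delta; case: (x == 0).
Qed.

Definition letter_power (g : WZ) : Prop := exists l n, eval_word (nseq n l) = g.

Lemma eval_word_nseq l n :
  eval_word (nseq n l) = match l with La => aexp n | LaI => aexp (- n%:Z)
                                    | Lb => bexp n | LbI => bexp (- n%:Z) end.
Proof.
elim: n => [|n IH]; first by case: l; apply: eqWZP; split => [x|] //=; rewrite mul0r.
rewrite eval_word_cons IH letter_valE -addn1 PoszD.
by clear IH; case: l; rewrite ?mulWZ_aexp ?mulWZ_bexp; congr (_ _); ring.
Qed.

Lemma aexp_power e : letter_power (aexp e).
Proof.
case: e => n; first by exists La, n; rewrite eval_word_nseq.
by exists LaI, n.+1; rewrite eval_word_nseq NegzE.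
Qed.

Lemma bexp_power k : letter_power (bexp k).
Proof.
case: k => n; first by exists Lb, n; rewrite eval_word_nseq.
by exists LbI, n.+1; rewrite eval_word_nseq NegzE.
Qed.

Lemma palindromic_power g : letter_power g -> palindromic g.
Proof.
case=> l [n <-]; exists (nseq n l); split; rewrite ?rev_nseq //.
by case: n => //= n; elim: n => //= n ->; rewrite andbT; case: l.
Qed.

Lemma palindromic_sandwich_power h g :
  letter_power h -> palindromic g -> palindromic (mulWZ h (mulWZ g h)).
Proof. by case=> l [n <-] /(palindromic_mirror (nseq n l)); rewrite rev_nseq. Qed.

Lemma aexp_sandwich e f k :
  mulWZ (aexp e) (mulWZ (f, k) (aexp e)) = (fun x => f x + e * (delta 0 x + delta k x), k).
Proof.
apply: eqWZP; split => [x|] /=; last by rewrite add0r addr0.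
by rewrite !subr0 delta_shift add0r; ring.
Qed.

Lemma bexp_sandwich z f k :
  mulWZ (bexp z) (mulWZ (f, k) (bexp z)) = (fun x => f (x - z), k + z + z).
Proof. by apply: eqWZP; split => [x|] /=; rewrite ?add0r ?addr0 // addrCA addrA. Qed.

(* [b^t a^e b^-t (f, k) b^-t a^e b^t] adds [e] at the mirror points [t] and [k - t]. *)
Lemma palindromic_add_pair t e f k :
  palindromic (f, k) -> palindromic (fun x => f x + e * (delta t x + delta (k - t) x), k).
Proof.
move=> Pf; move: (palindromic_sandwich_power (bexp_power t)
  (palindromic_sandwich_power (aexp_power e)
     (palindromic_sandwich_power (bexp_power (- t)) Pf))).
rewrite bexp_sandwich aexp_sandwich bexp_sandwich; apply: palindromic_eqWZ; split => [x|] /=; last by ring.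
rewrite !delta_shift add0r; congr (f _ + e * (_ + delta _ _)); ring.
Qed.

Definition supported_in (N : nat) (s : int -> int) : Prop :=
  forall z, (N < `|z|)%N -> s z = 0.

Definition symmetric_about (k : int) (s : int -> int) : Prop :=
  forall x, s (k - x) = s x.

Lemma symmetric_about_pair k c : symmetric_about k (fun x => delta c x + delta (k - c) x).
Proof. by move=> x; rewrite !delta_reflect subKr addrC. Qed.

Section StripPair.

Variables (k : int) (N : nat) (s : int -> int).
Hypotheses (k01 : 0 <= k <= 1) (s_sym : symmetric_about k s) (s_supp : supported_in N.+1 s).

Let c : int := N.+1.
Let s' x := s x - s c * (delta c x + delta (k - c) x).

Lemma symmetric_about_strip : symmetric_about k s'.
Proof. by move=> x; rewrite /s' s_sym symmetric_about_pair. Qed.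

Lemma supported_in_strip : supported_in N s'.
Proof.
move=> z lt_Nz; rewrite /s' /delta.
case: eqP => zc; case: eqP => zkc; rewrite /c in zc zkc *.
- lia.
- by rewrite zc addr0 mulr1 subrr.
- by rewrite zkc s_sym add0r mulr1 subrr.
have [/s_supp->|le_z] := ltnP N.+1 `|z|; first by rewrite addr0 mulr0 subr0.
by rewrite -s_sym s_supp ?addr0 ?mulr0 ?subr0 //; lia.
Qed.

End StripPair.

Lemma palindromic_symmetric k N s :
  0 <= k <= 1 -> symmetric_about k s -> supported_in N s -> palindromic (s, k).
Proof.
move=> k01; elim: N s => [|N IH] s s_sym s_supp.
  have s_delta x : s x = s 0 * delta 0 x.
    by rewrite /delta; case: eqP => [->|x0]; rewrite ?mulr1 ?mulr0 // s_supp //; lia.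
  have [->|k1] : k = 0 \/ k = 1 by lia.
    by apply: palindromic_eqWZ (palindromic_power (aexp_power (s 0))); split.
  have s0 : s 0 = 0 by rewrite -s_sym k1 s_supp.
  apply: palindromic_eqWZ (palindromic_power (bexp_power 1)); split => [x|] //=.
  by rewrite s_delta s0 mul0r.
move: (palindromic_add_pair N.+1 (s N.+1)
        (IH _ (symmetric_about_strip N s_sym) (supported_in_strip k01 s_sym s_supp))).
by apply: palindromic_eqWZ; split => [x|] //=; rewrite subrK.
Qed.

Definition finitely_supported (s : int -> int) : Prop := exists N, supported_in N s.

Definition decomposable (f : int -> int) : Prop :=
  exists s1 s2, [/\ symmetric_about 0 s1, symmetric_about 1 s2,
    finitely_supported s1, finitely_supported s2 & forall x, f x = s1 x + s2 x].

Lemma eq_decomposable f g : f =1 g -> decomposable f -> decomposable g.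
Proof.
move=> fg [s1 [s2 [sym1 sym2 fs1 fs2 f_s]]].
by exists s1, s2; split => // x; rewrite -fg.
Qed.

Lemma decomposable0 : decomposable (fun _ => 0).
Proof. by exists (fun _ => 0), (fun _ => 0); split => //; exists 0%N. Qed.

Lemma decomposable_addZ f g e :
  decomposable f -> decomposable g -> decomposable (fun x => f x + e * g x).
Proof.
move=> [s1 [s2 [sym1 sym2 [N1 fs1] [N2 fs2] f_s]]].
move=> [t1 [t2 [tsym1 tsym2 [M1 ft1] [M2 ft2] g_t]]].
exists (fun x => s1 x + e * t1 x), (fun x => s2 x + e * t2 x); split.
- by move=> x; rewrite sym1 tsym1.
- by move=> x; rewrite sym2 tsym2.
- by exists (maxn N1 M1) => z lt_z; rewrite fs1 ?ft1 ?mulr0 ?addr0 //; lia.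
- by exists (maxn N2 M2) => z lt_z; rewrite fs2 ?ft2 ?mulr0 ?addr0 //; lia.
- by move=> x; rewrite f_s g_t; ring.
Qed.

Lemma decomposable_symmetric k s :
  0 <= k <= 1 -> symmetric_about k s -> finitely_supported s -> decomposable s.
Proof.
move=> k01 sym fs; have fs0 : finitely_supported (fun _ => 0) by exists 0%N.
have [k0|k1] : k = 0 \/ k = 1 by lia.
  by exists s, (fun _ => 0); subst k; split => // x; rewrite addr0.
by exists (fun _ => 0), s; subst k; split => // x; rewrite add0r.
Qed.

Lemma decomposable_pair k c :
  0 <= k <= 1 -> decomposable (fun x => delta c x + delta (k - c) x).
Proof.
move=> k01; apply: decomposable_symmetric k01 (symmetric_about_pair k c) _.
by exists (`|c| + `|k - c|)%N => z lt_z; rewrite /delta; do 2 case: eqP => ? //; lia.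
Qed.

Lemma decomposable_delta_succ c : decomposable (delta c) <-> decomposable (delta (c + 1)).
Proof.
have pair0 := @decomposable_pair 0 c isT.
have pair1 := @decomposable_pair 1 (- c) isT.
rewrite sub0r in pair0; rewrite opprK addrC in pair1.
split => Dc.
  by apply: eq_decomposable (decomposable_addZ 1 (decomposable_addZ (-1) Dc pair0) pair1) => x; ring.
by apply: eq_decomposable (decomposable_addZ (-1) (decomposable_addZ 1 Dc pair0) pair1) => x; ring.
Qed.

Lemma decomposable_delta c : decomposable (delta c).
Proof.
elim/int_rec: c => [|n IH|n IH].
- apply: (@decomposable_symmetric 0) => //; last by exists 0%N => z; rewrite /delta; case: eqP => // ->.
  by move=> x; rewrite delta_reflect subr0.
- by rewrite -addn1 PoszD -decomposable_delta_succ.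
- by rewrite -addn1 PoszD opprD decomposable_delta_succ subrK.
Qed.

Lemma decomposable_supported N f : supported_in N f -> decomposable f.
Proof.
elim: N f => [|N IH] f f_supp.
  apply: eq_decomposable (decomposable_addZ (f 0) decomposable0 (decomposable_delta 0)) => x.
  rewrite add0r /delta; case: eqP => [->|x0]; first by rewrite mulr1.
  by rewrite mulr0 f_supp //; lia.
pose c : int := N.+1.
pose g x := f x - f c * delta c x - f (- c) * delta (- c) x.
have g_supp : supported_in N g.
  move=> z lt_z; rewrite /g /delta; case: eqP => zc; case: eqP => zc'; rewrite /c in zc zc' *.
  - lia.
  - by rewrite zc mulr1 mulr0 subr0 subrr.
  - by rewrite zc' mulr1 mulr0 subr0 subrr.
  by rewrite !mulr0 !subr0 f_supp //; lia.
apply: eq_decomposable (decomposable_addZ (f (- c))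
  (decomposable_addZ (f c) (IH g g_supp) (decomposable_delta c)) (decomposable_delta (- c))) => x.
by rewrite /g; ring.
Qed.

Theorem corollary5p5 : pw_le 3.
Proof.
move=> [f n] [N /decomposable_supported [s1 [s2 [sym1 sym2 [N1 fs1] [N2 fs2] f_s]]]].
exists [:: (s1, 0); (s2, 1); bexp (n - 1)]; split=> //; split.
  move=> [|[|[|i]]] // _; apply: palindromic_is_palindrome.
  - exact: palindromic_symmetric sym1 fs1.
  - exact: palindromic_symmetric sym2 fs2.
  - exact: palindromic_power (bexp_power _).
by split => [x|] /=; rewrite ?f_s subr0 ?addr0 // add0r addrC subrK.
Qed.
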